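(* Let $\mathfrak{H}$ be a fat indecomposable Hoffman graph with $\lambda_{\min}(\mathfrak{H})\ge-1-\tau$, where $\tau=\frac{1+\sqrt5}{2}$. If some slim vertex of $\mathfrak{H}$ has at least two fat neighbours, then $\mathcal{S}(\mathfrak{H})$ is isomorphic to $\mathcal{Q}_{0,0,1}$ (a single vertex), $\mathcal{Q}_{1,0,1}$ (two vertices joined by a $(+)$-edge), or $\mathcal{Q}_{0,1,1}$ (two vertices joined by a $(-)$-edge); in particular $\mathfrak{H}$ has at most two slim vertices.
   Context: A Hoffman graph $\mathfrak{H}$ is a finite simple graph $H$ together with a labeling of each vertex as slim or fat, such that every fat vertex is adjacent to at least one slim vertex and the fat vertices are pairwise non-adjacent. $V^s(\mathfrak{H})$ denotes the set of slim vertices and $N^f_{\mathfrak{H}}(x)$ the set of fat neighbours of $x$. $\mathfrak{H}$ is fat if every slim vertex has a fat neighbour. An induced Hoffman subgraph is a Hoffman graph whose underlying graph is an induced subgraph with inherited labels. Writing the adjacency matrix of $H$ with fat vertices last as $\begin{pmatrix}A_s & C\\ C^T & O\end{pmatrix}$, set $B(\mathfrak{H})=A_s-CC^T$; $\lambda_{\min}(\mathfrak{H})$ is its smallest eigenvalue. A decomposition of $\mathfrak{H}$ is a family $\{\mathfrak{H}^i\}_{i=1}^n$ of induced Hoffman subgraphs such that: (i) $V(\mathfrak{H})=\bigcup_i V(\mathfrak{H}^i)$; (ii) slim vertex sets of distinct members are disjoint; (iii) if $x\in V^s(\mathfrak{H}^i)$ and $y$ is a fat neighbour of $x$ in $\mathfrak{H}$,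 then $y\in V(\mathfrak{H}^i)$; (iv) if $x\in V^s(\mathfrak{H}^i)$, $y\in V^s(\mathfrak{H}^j)$, $i\neq j$, then $|N^f_{\mathfrak{H}}(x)\cap N^f_{\mathfrak{H}}(y)|\le 1$, with equality iff $x,y$ are adjacent. $\mathfrak{H}$ is indecomposable if it has no decomposition with $n\ge2$. The special graph $\mathcal{S}(\mathfrak{H})$ is the edge-signed graph (edges labelled $+$ or $-$) with vertex set $V^s(\mathfrak{H})$ in which distinct $u,v$ are joined by a $(+)$-edge iff they are adjacent in $\mathfrak{H}$ and have no common fat neighbour, by a $(-)$-edge iff they are non-adjacent in $\mathfrak{H}$ and have a common fat neighbour, and are not joined otherwise; isomorphisms of edge-signed graphs preserve signs. *)

From HB Require Import structures.
From mathcomp Require Import all_boot all_order all_algebra.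
From mathcomp Require Import algC.
Set Implicit Arguments. Unset Strict Implicit. Unset Printing Implicit Defensive.
Import Order.TTheory GRing.Theory Num.Theory.

Definition hoffman_graph (T : finType) (e : rel T) (fat : pred T) : Prop :=
  [/\ (forall x, ~~ e x x),
      (forall x y, e x y = e y x),
      (forall x y, fat x -> fat y -> ~~ e x y) &
      (forall y, fat y -> exists x, ~~ fat x /\ e x y)].

Definition fat_nbrs (T : finType) (e : rel T) (fat : pred T) (x : T) : {set T} :=
  [set y | fat y && e x y].

Definition common_fat (T : finType) (e : rel T) (fat : pred T) (x y : T) : nat :=
  #|fat_nbrs e fat x :&: fat_nbrs e fat y|.

Definition fat_hoffman (T : finType) (e : rel T) (fat : pred T) : Prop :=
  forall x, ~~ fat x -> exists y, fat y /\ e x y.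

Definition slimT (T : finType) (fat : pred T) := {x : T | ~~ fat x}.
Definition fatT (T : finType) (fat : pred T) := {x : T | fat x}.

Definition As_mx (T : finType) (e : rel T) (fat : pred T) :
  'M[algC]_(#|{: slimT fat}|) :=
  (\matrix_(i, j) (e (val (enum_val i)) (val (enum_val j)))%:R)%R.

Definition C_mx (T : finType) (e : rel T) (fat : pred T) :
  'M[algC]_(#|{: slimT fat}|, #|{: fatT fat}|) :=
  (\matrix_(i, j) (e (val (enum_val i)) (val (enum_val j)))%:R)%R.

Definition B_mx (T : finType) (e : rel T) (fat : pred T) :
  'M[algC]_(#|{: slimT fat}|) :=
  (As_mx e fat - C_mx e fat *m (C_mx e fat)^T)%R.

(* lambda_min(H) >= c : every eigenvalue of the (real symmetric) matrix B is >= c *)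
Definition lambda_min_ge (T : finType) (e : rel T) (fat : pred T) (c : algC) : Prop :=
  forall a : algC, eigenvalue (B_mx e fat) a -> (c <= a)%R.

Definition tau : algC := ((1 + sqrtC 5) / 2)%R.

Definition induced_hoffman_sub (T : finType) (e : rel T) (fat : pred T) (U : {set T}) : Prop :=
  U != set0 /\ (forall y, y \in U -> fat y -> exists2 x, x \in U & ~~ fat x /\ e x y).

Definition is_decomposition (T : finType) (e : rel T) (fat : pred T)
  (n : nat) (U : 'I_n -> {set T}) : Prop :=
  [/\ (forall i, induced_hoffman_sub e fat (U i)),
      (forall v : T, exists i, v \in U i),
      (forall i j x, i != j -> x \in U i -> x \in U j -> fat x),
      (forall i x y, x \in U i -> ~~ fat x -> fat y -> e x y -> y \in U i) &
      (forall i j x y, i != j -> x \in U i -> ~~ fat x -> y \in U j -> ~~ fat y ->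
          common_fat e fat x y <= 1 /\ (common_fat e fat x y == 1) = e x y)].

Definition indecomposable (T : finType) (e : rel T) (fat : pred T) : Prop :=
  ~ exists n (U : 'I_n -> {set T}), 2 <= n /\ is_decomposition e fat U.

Definition sg_pos (T : finType) (e : rel T) (fat : pred T) : rel (slimT fat) :=
  fun u v => [&& val u != val v, e (val u) (val v) & common_fat e fat (val u) (val v) == 0].
Definition sg_neg (T : finType) (e : rel T) (fat : pred T) : rel (slimT fat) :=
  fun u v => [&& val u != val v, ~~ e (val u) (val v) & common_fat e fat (val u) (val v) != 0].

Definition signed_iso (A B : finType) (pA nA : rel A) (pB nB : rel B) : Prop :=
  exists f : A -> B, bijective f /\
    forall x y, pA x y = pB (f x) (f y) /\ nA x y = nB (f x) (f y).

Definition Q001_pos : rel 'I_1 := fun _ _ => false.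
Definition Q001_neg : rel 'I_1 := fun _ _ => false.
Definition Q101_pos : rel 'I_2 := fun x y => x != y.
Definition Q101_neg : rel 'I_2 := fun _ _ => false.
Definition Q011_pos : rel 'I_2 := fun _ _ => false.
Definition Q011_neg : rel 'I_2 := fun x y => x != y.
Arguments sg_pos {T} e fat _ _.
Arguments sg_neg {T} e fat _ _.

From HB Require Import structures.
From mathcomp Require Import all_boot all_order all_algebra.
From mathcomp Require Import algC.
From mathcomp Require Import sesquilinear spectral ring zify.
Import Order.TTheory GRing.Theory Num.Theory.
Set Implicit Arguments. Unset Strict Implicit. Unset Printing Implicit Defensive.
Local Open Scope ring_scope.
Local Open Scope sesquilinear_scope.

(* Write b(p, q) = [p ~ q] - |N^f(p) /\ N^f(q)|; these integers are the entries
   of the real symmetric matrix B(H).  Since every eigenvalue of B(H) is at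
   least -1 - tau, the Rayleigh bound gives u B u^T >= (-1 - tau) |u|^2 for
   every vector u, and as 50 (1 + tau) <= 131 this becomes the integer
   inequality 131 |u|^2 + 50 u B u^T >= 0 for integer test vectors u supported
   on at most three slim vertices (three_point_ineq).  Well-chosen test vectors
   show: every slim vertex has at most two fat neighbours; if x has two, then
   x is b-related to at most one other slim vertex y, which has one fat
   neighbour, satisfies b(x, y) = +-1, and is b-orthogonal to all other slim
   vertices.  A cut of the slim vertices not crossed by any nonzero b yields a
   decomposition (side_decomposition), so by indecomposability the slim
   vertices are exactly x and possibly y.  The special graph is then a single
   vertex, or an edge whose sign is the sign of b(x, y). *)

(* Every diagonal entry of the spectral decomposition of a normal matrix is an
   eigenvalue; the corresponding row of the unitary matrix is an eigenvector. *)
Lemma spectral_diag_eigenvalue n (A : 'M[algC]_n) i :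
  A \is normalmx -> eigenvalue A (spectral_diag A 0 i).
Proof.
move=> /orthomx_spectralP eA.
have PU := spectral_unitarymx A.
set P := spectralmx A in eA PU *; set d := spectral_diag A in eA *.
have PP : P *m P^t* = 1%:M by apply/unitarymxP.
rewrite invmx_unitary // in eA.
apply/eigenvalueP; exists (row i P).
  rewrite [in LHS]eA rowE !mulmxA -(mulmxA _ P) PP mulmx1.
  by rewrite -(rowE i (diag_mx d)) row_diag_mx -scalemxAl -rowE.
apply/eqP => /(congr1 (fun M => M *m P^t*)).
rewrite mul0mx rowE -mulmxA PP mulmx1 => /matrixP/(_ 0 i).
by rewrite !mxE => /eqP; rewrite pnatr_eq0 !eqxx.
Qed.

Lemma rayleigh_lower_bound n (A : 'M[algC]_n) (c : algC) :
  A \is hermsymmx -> (forall a, eigenvalue A a -> c <= a) ->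
  forall u : 'rV_n, c * (u *m u ^t*) 0 0 <= (u *m A *m u ^t*) 0 0.
Proof.
move=> /hermitian_normalmx nA hc u.
have PU := spectral_unitarymx A.
set P := spectralmx A in PU; set d := spectral_diag A.
have eA : A = P^t* *m diag_mx d *m P.
  by rewrite -invmx_unitary //; exact/orthomx_spectralP.
have PtP : P^t* *m P = 1%:M by rewrite -invmx_unitary // mulVmx ?spectral_unit.
set w := u *m P^t*.
have ew : w ^t* = P *m u ^t* by rewrite /w trmx_mul map_mxM trmxCK.
have -> : u *m A *m u ^t* = w *m diag_mx d *m w ^t* by rewrite ew eA /w !mulmxA.
have -> : u *m u ^t* = w *m w ^t*.
  by rewrite ew /w !mulmxA -(mulmxA u) PtP mulmx1.
rewrite mul_mx_diag !mxE mulr_sumr; apply: ler_sum => i _.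
rewrite !mxE mulrAC mulrC; apply: ler_wpM2l; first exact: mul_conjC_ge0.
exact/hc/spectral_diag_eigenvalue.
Qed.

Lemma quad_form_delta n (M : 'M[algC]_n) i j :
  ('e_i : 'rV_n) *m M *m ('e_j : 'rV_n)^T = (M i j)%:M.
Proof. by apply/matrixP => x y; rewrite trmx_delta -rowE -colE !mxE !ord1. Qed.

Lemma quad_form3 n (M : 'M[algC]_n) (a b c : algC) i j k :
  let u : 'rV_n := a *: 'e_i + b *: 'e_j + c *: 'e_k in
  (u *m M *m u^T) 0 0 = a*a*M i i + a*b*M i j + a*c*M i k
     + b*a*M j i + b*b*M j j + b*c*M j k + c*a*M k i + c*b*M k j + c*c*M k k.
Proof.
rewrite /= !linearD /= !linearZ /= !mulmxDl -!scalemxAl !quad_form_delta.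
rewrite !mxE /= mulr1n; ring.
Qed.

(* 1 + tau = 2.618... <= 131/50: the rational bound through which the spectral
   hypothesis becomes an integer inequality. *)
Lemma one_plus_tau_bound : 50 * (1 + tau) <= 131 :> algC.
Proof.
set s := sqrtC (5 : algC).
have s0 : 0 <= s by rewrite sqrtC_ge0 ler0n.
have hs : 25 * s <= 56.
  rewrite -(ler_pXn2r (n := 2)) ?nnegrE ?mulr_ge0 ?ler0n //.
  by rewrite exprMn sqrtCK !expr2 -!natrM ler_nat.
have -> : 50 * (1 + tau) = 75 + 25 * s by rewrite /tau -/s; field.
by rewrite (_ : 131 = 75 + 56 :> algC) ?lerD2l // -natrD.
Qed.

Lemma tau_int_bound (N Q : int) : 0 <= N -> (-1 - tau) * N%:~R <= Q%:~R :> algC ->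
  0 <= 131 * N + 50 * Q.
Proof.
move=> hN h.
have hN' : 0 <= N%:~R :> algC by rewrite ler0z.
have tauN := ler_wpM2r hN' one_plus_tau_bound.
have : -131 * N%:~R <= 50 * Q%:~R :> algC.
  apply: le_trans (ler_wpM2l (ler0n _ 50) h).
  rewrite (_ : 50 * ((-1 - tau) * N%:~R) = - (50 * (1 + tau) * N%:~R)); last by ring.
  by rewrite mulNr lerN2.
have -> : -131 * N%:~R = (-131 * N)%:~R :> algC by rewrite intrM.
have -> : 50 * Q%:~R = (50 * Q)%:~R :> algC by rewrite intrM.
by rewrite ler_int; lia.
Qed.

Section SpecialGraphs.
Variables (A : finType) (pA nA : rel A).
Hypotheses (pA_irr : irreflexive pA) (nA_irr : irreflexive nA).

Lemma signed_iso_one (pB nB : rel 'I_1) (a : A) :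
  irreflexive pB -> irreflexive nB -> (forall u, u = a) -> signed_iso pA nA pB nB.
Proof.
move=> pB_irr nB_irr onlya; exists (fun _ => ord0); split.
  exists (fun _ => a) => [u|i]; first by rewrite [RHS]onlya.
  by apply: val_inj; case: i => [[]].
move=> u v; rewrite (onlya u) (onlya v) pA_irr nA_irr.
by rewrite pB_irr nB_irr.
Qed.

Hypotheses (pA_sym : symmetric pA) (nA_sym : symmetric nA).

Lemma signed_iso_two (pB nB : rel 'I_2) (a0 a1 : A) :
  irreflexive pB -> irreflexive nB -> symmetric pB -> symmetric nB ->
  a0 != a1 -> (forall u, u = a0 \/ u = a1) ->
  pA a0 a1 = pB ord0 ord_max -> nA a0 a1 = nB ord0 ord_max ->
  signed_iso pA nA pB nB.
Proof.
move=> pB_irr nB_irr pB_sym nB_sym a01 onlya pa na.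
pose f u : 'I_2 := if u == a0 then ord0 else ord_max.
have fa0 : f a0 = ord0 by rewrite /f eqxx.
have fa1 : f a1 = ord_max by rewrite /f eq_sym (negbTE a01).
exists f; split.
  exists (fun i : 'I_2 => if i == ord0 then a0 else a1).
    by move=> u; case: (onlya u) => ->; rewrite ?fa0 ?fa1.
  by case=> [[|[|//]] ?]; apply: val_inj; rewrite /= ?fa0 ?fa1.
by move=> u v; case: (onlya u) => ->; case: (onlya v) => ->;
  rewrite ?fa0 ?fa1 ?pA_irr ?nA_irr ?pB_irr ?nB_irr // pA_sym nA_sym pB_sym nB_sym.
Qed.

End SpecialGraphs.

Section HoffmanGraph.
Variables (T : finType) (e : rel T) (fat : pred T).

Definition fat_deg (p : T) : nat := #|fat_nbrs e fat p|.
Definition bval (p q : T) : int := (e p q)%:Z - (common_fat e fat p q)%:Z.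

(* Common fat neighbours counted in the subtype of fat vertices, the form in
   which the product C C^T counts them. *)
Lemma common_fat_card p q :
  common_fat e fat p q = #|[pred y : fatT fat | e p (val y) && e q (val y)]|.
Proof.
rewrite /common_fat.
have -> : fat_nbrs e fat p :&: fat_nbrs e fat q =
          val @: [set y : fatT fat | e p (val y) && e q (val y)].
  apply/setP => y; rewrite !inE; apply/andP/imsetP.
    move=> [/andP[fy epy] /andP[_ eqy]].
    by exists (exist _ y fy : fatT fat) => //; rewrite inE /= epy eqy.
  by move=> [z]; rewrite inE => /andP[h1 h2] ->; rewrite (valP z) h1 h2.
by rewrite card_imset; [apply: eq_card => y; rewrite inE | exact: val_inj].
Qed.

Lemma B_mx_entry i j :
  B_mx e fat i j = (bval (val (enum_val i)) (val (enum_val j)))%:~R.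
Proof.
rewrite /B_mx /As_mx /C_mx !mxE /bval common_fat_card intrB; congr (_ - _).
under eq_bigr => k _ do rewrite !mxE.
rewrite -(big_enum_val (A := {: fatT fat}) (fun y : fatT fat =>
   (e (val (enum_val i)) (val y))%:R * (e (val (enum_val j)) (val y))%:R)) /=.
under eq_bigr => y _ do rewrite -natrM mulnb.
rewrite -natr_sum pmulrn; congr _%:R.
rewrite -sum1_card [RHS]big_mkcond /=; apply: eq_bigr => y _.
by rewrite inE /=; case: (_ && _).
Qed.

Lemma common_fat_sym p q : common_fat e fat p q = common_fat e fat q p.
Proof. by rewrite /common_fat setIC. Qed.

Lemma common_fat_le_deg p q : (common_fat e fat p q <= fat_deg p)%N.
Proof. by rewrite /common_fat /fat_deg subset_leq_card // subsetIl. Qed.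

Lemma bval_ge p q : - (fat_deg p)%:Z <= bval p q.
Proof. by rewrite /bval; have := common_fat_le_deg p q; case: (e p q) => /=; lia. Qed.

Lemma bval_le1 p q : bval p q <= 1.
Proof. by rewrite /bval; case: (e p q) => /=; lia. Qed.

Lemma bval_eq1 p q : bval p q = 1 -> e p q /\ common_fat e fat p q = 0%N.
Proof. by rewrite /bval; case: (e p q) => /=; lia. Qed.

Lemma bval_eqN1 p q : (common_fat e fat p q <= 1)%N -> bval p q = -1 ->
  ~~ e p q /\ common_fat e fat p q = 1%N.
Proof. by rewrite /bval; case: (e p q) => /=; lia. Qed.

Lemma bval_eq0 p q : bval p q = 0 ->
  (common_fat e fat p q <= 1)%N /\ (common_fat e fat p q == 1)%N = e p q.
Proof.
by rewrite /bval => /eqP; rewrite subr_eq0 eqz_nat => /eqP <-; case: (e p q).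
Qed.

Lemma fat_deg_gt0 p : fat_hoffman e fat -> ~~ fat p -> (0 < fat_deg p)%N.
Proof.
move=> hF /hF [y [fy ey]]; rewrite /fat_deg card_gt0; apply/set0Pn; exists y.
by rewrite inE fy ey.
Qed.

Hypothesis hH : hoffman_graph e fat.

(* B(H) is symmetric, with diagonal entries -|N^f(p)|; being real it is
   Hermitian, so the Rayleigh bound applies to it. *)
Lemma bval_sym p q : bval p q = bval q p.
Proof. by case: hH => _ hsym _ _; rewrite /bval hsym common_fat_sym. Qed.

Lemma bval_diag p : bval p p = - (fat_deg p)%:Z.
Proof.
by case: hH => hirr _ _ _; rewrite /bval /common_fat setIid (negbTE (hirr p)) add0r.
Qed.

Lemma B_mx_herm : B_mx e fat \is hermsymmx.
Proof.
apply: realsym_hermsym.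
  apply/is_hermitianmxP; rewrite expr0 scale1r; apply/matrixP => i j.
  by rewrite B_mx_entry mxE /= mxE B_mx_entry bval_sym.
by apply/mxOverP => i j; rewrite B_mx_entry realz.
Qed.

(* The spectral hypothesis lambda_min >= -1 - tau, tested on the integer vector
   a e_p + b e_q + c e_r (p, q, r slim, not necessarily distinct): with
   N = |u|^2 and Q = u B u^T this reads 131 N + 50 Q >= 0. *)
Lemma three_point_ineq (hl : lambda_min_ge e fat (-1 - tau))
  p q r (hp : ~~ fat p) (hq : ~~ fat q) (hr : ~~ fat r) (a b c : int) :
  0 <= 131 * (a*a + b*b + c*c + 2*a*b*(p==q)%:Z + 2*a*c*(p==r)%:Z + 2*b*c*(q==r)%:Z)
       + 50 * (a*a*bval p p + b*b*bval q q + c*c*bval r r + 2*a*b*bval p q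
               + 2*a*c*bval p r + 2*b*c*bval q r).
Proof.
pose idx x (hx : ~~ fat x) := enum_rank (exist _ x hx : slimT fat).
have idxK x hx : val (enum_val (idx x hx)) = x by rewrite enum_rankK.
have eq_idx x y hx hy : (idx x hx == idx y hy) = (x == y).
  apply/eqP/eqP => [/enum_rank_inj/(congr1 val) //|xy].
  by subst y; rewrite (bool_irrelevance hx hy).
set u : 'rV[algC]_#|{: slimT fat}| :=
  a%:~R *: 'e_(idx p hp) + b%:~R *: 'e_(idx q hq) + c%:~R *: 'e_(idx r hr).
have ureal : u ^t* = u^T.
  apply: realmxC; apply/mxOverP => x y; rewrite !mxE.
  by rewrite !rpredD ?rpredM ?realz ?realn.
have norm_ge0 : 0 <= (u *m u ^t*) 0 0.
  by rewrite mxE; apply: sumr_ge0 => j _; rewrite !mxE mul_conjC_ge0.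
have := rayleigh_lower_bound B_mx_herm hl u.
have unorm : u *m u^t* = u *m 1%:M *m u^T by rewrite mulmx1 ureal.
rewrite unorm in norm_ge0; rewrite unorm ureal.
rewrite !quad_form3 !B_mx_entry !idxK !mxE !eq_idx !eqxx /= ?mulr1n in norm_ge0 *.
rewrite ![q == p]eq_sym ![r == p]eq_sym ![r == q]eq_sym in norm_ge0 *.
rewrite [bval q p]bval_sym [bval r p]bval_sym [bval r q]bval_sym => ray.
have le_of_eq (x y : algC) : x = y -> x <= y by move=> ->.
apply: tau_int_bound.
  rewrite -(ler_int algC); apply: le_trans norm_ge0 (le_of_eq _ _ _).
  by rewrite !(intrD, intrM) -!pmulrn; ring.
apply: le_trans (le_trans (le_of_eq _ _ _) ray) (le_of_eq _ _ _);
  by rewrite !(intrD, intrM) -!pmulrn; ring.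
Qed.

End HoffmanGraph.

Section SpectralConsequences.
Variables (T : finType) (e : rel T) (fat : pred T).
Hypotheses (hH : hoffman_graph e fat) (hF : fat_hoffman e fat).
Hypothesis hl : lambda_min_ge e fat (-1 - tau).

Local Notation bval := (bval e fat).
Local Notation fat_deg := (fat_deg e fat).

(* Test vector e_p: a slim vertex has at most two fat neighbours. *)
Lemma fat_deg_le2 p : ~~ fat p -> (fat_deg p <= 2)%N.
Proof.
move=> hp; have := three_point_ineq hH hl hp hp hp 1 0 0.
by rewrite !eqxx bval_diag //=; lia.
Qed.

(* Test vectors e_w +- e_y: a slim vertex y related by b to a slim vertex w with
   two fat neighbours has a single fat neighbour, and b(w, y) = +-1. *)
Lemma deg2_b_neighbour w y : ~~ fat w -> ~~ fat y -> fat_deg w = 2%N ->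
  y != w -> bval w y != 0 -> fat_deg y = 1%N /\ (bval w y = 1 \/ bval w y = -1).
Proof.
move=> hw hy dw yw nz.
have h1 := three_point_ineq hH hl hw hy hw 1 1 0.
have h2 := three_point_ineq hH hl hw hy hw 1 (-1) 0.
rewrite eq_sym (negbTE yw) eqxx !bval_diag // dw in h1 h2.
have := fat_deg_le2 hy; have := fat_deg_gt0 hF hy; have := bval_ge e fat y w.
have := bval_le1 e fat w y; rewrite (bval_sym hH y w).
move: nz; move: (bval w y) (fat_deg y) h1 h2 => b d /= h1 h2; lia.
Qed.

(* Test vectors 2 e_x +- e_y +- e_z: a slim vertex x with two fat neighbours has
   at most one other slim vertex y with b(x, y) <> 0. *)
Lemma deg2_unique_b_neighbour x y z : ~~ fat x -> ~~ fat y -> ~~ fat z ->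
  fat_deg x = 2%N -> y != x -> z != x -> z != y ->
  bval x y != 0 -> bval x z != 0 -> False.
Proof.
move=> hx hy hz dx yx zx zy nzy nzz.
have [dy hy1] := deg2_b_neighbour hx hy dx yx nzy.
have [dz hz1] := deg2_b_neighbour hx hz dx zx nzz.
have h1 := three_point_ineq hH hl hx hy hz 2 1 1.
have h2 := three_point_ineq hH hl hx hy hz 2 1 (-1).
have h3 := three_point_ineq hH hl hx hy hz 2 (-1) 1.
have h4 := three_point_ineq hH hl hx hy hz 2 (-1) (-1).
have lo := bval_ge e fat y z; have hi := bval_le1 e fat y z.
rewrite eq_sym (negbTE yx) eq_sym (negbTE zx) eq_sym (negbTE zy) !bval_diag //
  dx dy dz in h1 h2 h3 h4 lo.
move: (bval x y) (bval x z) (bval y z) hy1 hz1 h1 h2 h3 h4 lo hi => a b c /=; lia.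
Qed.

(* Test vectors 2 e_x +- 2 e_y +- e_z and e_x +- e_y +- e_z: the b-neighbour y
   of such an x is b-orthogonal to every third slim vertex z. *)
Lemma deg2_b_neighbour_isolated x y z : ~~ fat x -> ~~ fat y -> ~~ fat z ->
  fat_deg x = 2%N -> y != x -> z != x -> z != y -> bval x y != 0 -> bval y z = 0.
Proof.
move=> hx hy hz dx yx zx zy nzy; apply/eqP; apply: contraT => nyz.
have xz0 : bval x z = 0.
  apply/eqP; apply: contraT => nzz.
  by case: (deg2_unique_b_neighbour hx hy hz dx yx zx zy nzy nzz).
have [dy hy1] := deg2_b_neighbour hx hy dx yx nzy.
have := fat_deg_le2 hz; have := fat_deg_gt0 hF hz.
have lo := bval_ge e fat y z; have hi := bval_le1 e fat y z.
have h1 := three_point_ineq hH hl hx hy hz 2 (-2) 1.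
have h2 := three_point_ineq hH hl hx hy hz 2 (-2) (-1).
have h3 := three_point_ineq hH hl hx hy hz 2 2 (-1).
have h4 := three_point_ineq hH hl hx hy hz 2 2 1.
have h5 := three_point_ineq hH hl hx hy hz 1 (-1) 1.
have h6 := three_point_ineq hH hl hx hy hz 1 (-1) (-1).
have h7 := three_point_ineq hH hl hx hy hz 1 1 (-1).
have h8 := three_point_ineq hH hl hx hy hz 1 1 1.
rewrite eq_sym (negbTE yx) eq_sym (negbTE zx) eq_sym (negbTE zy) !bval_diag //
  dx dy xz0 in h1 h2 h3 h4 h5 h6 h7 h8 lo.
move: nyz; move: (bval x y) (bval y z) (fat_deg z) hy1 h1 h2 h3 h4 h5 h6 h7 h8 lo hi.
by move=> a c d /=; lia.
Qed.

End SpectralConsequences.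

Section Decomposition.
Variables (T : finType) (e : rel T) (fat : pred T).
Hypothesis hH : hoffman_graph e fat.

Definition side (P : pred T) (b : bool) : {set T} :=
  [set v | (~~ fat v && (P v == b))
           || (fat v && [exists p, ~~ fat p && (P p == b) && e p v])].

Lemma ord2_neq (i j : 'I_2) : i != j -> (j == ord0) = ~~ (i == ord0).
Proof. by case: i => [[|[|//]] ?]; case: j => [[|[|//]] ?]. Qed.

Lemma side_decomposition (P : pred T) :
  (exists a, ~~ fat a && P a) -> (exists w, ~~ fat w && ~~ P w) ->
  (forall p q, ~~ fat p -> ~~ fat q -> P p -> ~~ P q -> bval e fat p q = 0) ->
  is_decomposition e fat (fun i : 'I_2 => side P (i == ord0)).
Proof.
move=> [a /andP[fa Pa]] [w /andP[fw Pw]] cut.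
case: (hH) => _ _ _ fat_slim_nbr; split.
-
  move=> i; split.
    apply/set0Pn; case: (i == ord0); first by exists a; rewrite inE fa Pa.
    by exists w; rewrite inE fw (negbTE Pw).
  move=> y; rewrite inE => /orP[/andP[nf _]|/andP[_ /existsP[p /andP[/andP[fp Pp] epy]]]] fy.
    by rewrite fy in nf.
  by exists p => //; rewrite inE fp Pp.
-
  move=> v; case fv: (fat v).
    have [x [fx ex]] := fat_slim_nbr v fv.
    exists (if P x then ord0 else ord_max); rewrite inE fv /=; apply/existsP.
    by exists x; rewrite fx ex andbT; case: (P x).
  by exists (if P v then ord0 else ord_max); rewrite inE fv /=; case: (P v).
-
  move=> i j x ij; rewrite !inE; case: (fat x) => //=; rewrite !orbF (ord2_neq ij).
  by case: (P x); case: (i == ord0).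
-
  move=> i x y; rewrite !inE => /orP[/andP[_ Px]|/andP[fx _]] hx fy exy;
    last by rewrite fx in hx.
  by rewrite fy /=; apply/existsP; exists x; rewrite hx Px exy.
-
  move=> i j x y ij; rewrite !inE => /orP[/andP[_ Px]|/andP[fx _]] hx;
    last by rewrite fx in hx.
  move=> /orP[/andP[_ Py]|/andP[fy _]] hy; last by rewrite fy in hy.
  rewrite (ord2_neq ij) in Py; apply: bval_eq0.
  move: Px Py; case: (i == ord0); case Px: (P x); case Py: (P y) => //= _ _.
    by apply: cut => //; rewrite Py.
  by rewrite (bval_sym hH); apply: cut => //; rewrite Px.
Qed.

Lemma indecomposable_no_b_cut (P : pred T) : indecomposable e fat ->
  (exists a, ~~ fat a && P a) -> (exists w, ~~ fat w && ~~ P w) ->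
  ~ (forall p q, ~~ fat p -> ~~ fat q -> P p -> ~~ P q -> bval e fat p q = 0).
Proof.
move=> hI hP hnP cut; apply: hI.
by exists 2%N, (fun i : 'I_2 => side P (i == ord0)); split; last exact: side_decomposition.
Qed.

End Decomposition.

Section SpecialGraph.
Variables (T : finType) (e : rel T) (fat : pred T).
Hypothesis hH : hoffman_graph e fat.

Lemma sg_pos_irr : irreflexive (sg_pos e fat).
Proof. by move=> u; rewrite /sg_pos eqxx. Qed.

Lemma sg_neg_irr : irreflexive (sg_neg e fat).
Proof. by move=> u; rewrite /sg_neg eqxx. Qed.

Lemma sg_pos_sym : symmetric (sg_pos e fat).
Proof.
by case: hH => _ hsym _ _ u v; rewrite /sg_pos eq_sym hsym common_fat_sym.
Qed.

Lemma sg_neg_sym : symmetric (sg_neg e fat).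
Proof.
by case: hH => _ hsym _ _ u v; rewrite /sg_neg eq_sym hsym common_fat_sym.
Qed.

Lemma special_graph_single x : ~~ fat x -> (forall z, ~~ fat z -> z = x) ->
  signed_iso (sg_pos e fat) (sg_neg e fat) Q001_pos Q001_neg.
Proof.
move=> fx onlyx.
apply: (signed_iso_one sg_pos_irr sg_neg_irr _ _ (a := exist _ x fx)) => //.
by case=> z fz; apply: val_inj; exact: onlyx.
Qed.

Lemma special_graph_pair x y : ~~ fat x -> ~~ fat y -> y != x ->
  fat_deg e fat y = 1%N -> (forall z, ~~ fat z -> z = x \/ z = y) ->
  bval e fat x y = 1 \/ bval e fat x y = -1 ->
  signed_iso (sg_pos e fat) (sg_neg e fat) Q101_pos Q101_neg \/
  signed_iso (sg_pos e fat) (sg_neg e fat) Q011_pos Q011_neg.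
Proof.
move=> fx fy yx dy onlyxy hb.
pose sx : slimT fat := exist _ x fx; pose sy : slimT fat := exist _ y fy.
have sxy : sx != sy by rewrite -(inj_eq val_inj) eq_sym.
have onlys (u : slimT fat) : u = sx \/ u = sy.
  by case: u => z fz; case: (onlyxy z fz) => ?; [left|right]; apply: val_inj.
have common_le1 : (common_fat e fat x y <= 1)%N.
  by rewrite common_fat_sym -dy common_fat_le_deg.
have xy : x != y by rewrite eq_sym.
have iso_two := signed_iso_two sg_pos_irr sg_neg_irr sg_pos_sym sg_neg_sym.
case: hb => [/bval_eq1 [exy c0] | /(bval_eqN1 common_le1) [nexy c1]].
  left; apply: (iso_two _ _ sx sy) => //.
  - by move=> i; rewrite /Q101_pos eqxx.
  - by move=> i j; rewrite /Q101_pos eq_sym.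
  - by rewrite /sg_pos /= xy exy c0.
  - by rewrite /sg_neg /= exy andbF.
right; apply: (iso_two _ _ sx sy) => //.
- by move=> i; rewrite /Q011_neg eqxx.
- by move=> i j; rewrite /Q011_neg eq_sym.
- by rewrite /sg_pos /= (negbTE nexy) andbF.
- by rewrite /sg_neg /= xy nexy c1.
Qed.

End SpecialGraph.

Lemma slim_card_le2 (T : finType) (fat : pred T) x y :
  (forall z, ~~ fat z -> z = x \/ z = y) -> (#|[set z | ~~ fat z]| <= 2)%N.
Proof.
move=> onlyxy; apply: leq_trans (subset_leq_card (_ : _ \subset [set x; y])) _.
  by apply/subsetP => z; rewrite !inE => /onlyxy [] ->; rewrite eqxx ?orbT.
by rewrite cards2; case: (x != y).
Qed.

Section SlimVertices.
Variables (T : finType) (e : rel T) (fat : pred T).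
Hypotheses (hH : hoffman_graph e fat) (hF : fat_hoffman e fat).
Hypothesis hl : lambda_min_ge e fat (-1 - tau).
Hypothesis hI : indecomposable e fat.
Variable x : T.
Hypotheses (fx : ~~ fat x) (dx : fat_deg e fat x = 2%N).

(* Every slim vertex is x or b-related to x: the b-neighbours of x are
   b-orthogonal to all other slim vertices, so x and its b-neighbours would
   otherwise be cut off from the rest, contradicting indecomposability. *)
Lemma slim_b_related p : ~~ fat p -> p = x \/ bval e fat x p != 0.
Proof.
pose P q := (q == x) || (bval e fat x q != 0).
move=> fp; case: (eqVneq p x) => [|px]; [by left | right].
apply/negP => bp0; apply: (@indecomposable_no_b_cut _ _ _ hH P hI).
- by exists x; rewrite fx /P eqxx.
- by exists p; rewrite fp /P negb_or px bp0.
move=> p' q fp' fq Pp' /norP[qx /negbNE/eqP bq0].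
case: (eqVneq p' x) => [->|p'x] //.
have bp' : bval e fat x p' != 0 by move: Pp'; rewrite /P (negbTE p'x).
have qp' : q != p' by apply: contraNneq bp' => <-; exact/eqP.
exact: (deg2_b_neighbour_isolated hH hF hl fx fp' fq dx p'x qx qp' bp').
Qed.

Lemma slim_vertices_structure :
  (forall z, ~~ fat z -> z = x) \/
  exists y, [/\ ~~ fat y, y != x, fat_deg e fat y = 1%N,
              bval e fat x y = 1 \/ bval e fat x y = -1
            & forall z, ~~ fat z -> z = x \/ z = y].
Proof.
case: (pickP (fun y => ~~ fat y && (y != x))) => [y /andP[fy yx] | none]; last first.
  by left => z fz; move: (none z); rewrite fz /= => /negbFE/eqP.
right; have bxy : bval e fat x y != 0.
  by case: (slim_b_related fy) => // yx'; rewrite yx' eqxx in yx.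
have [dy hb] := deg2_b_neighbour hH hF hl fx fy dx yx bxy.
exists y; split => // z fz.
case: (eqVneq z x) => [|zx]; first by left.
case: (eqVneq z y) => [|zy]; first by right.
have bxz : bval e fat x z != 0 by case: (slim_b_related fz) => // zx'; rewrite zx' eqxx in zx.
by case: (deg2_unique_b_neighbour hH hF hl fx fy fz dx yx zx zy bxy bxz).
Qed.

End SlimVertices.

Local Close Scope sesquilinear_scope.
Local Close Scope ring_scope.
Unset Implicit Arguments.

Theorem mainTheorem10 (T : finType) (e : rel T) (fat : pred T) :
  hoffman_graph e fat ->
  fat_hoffman e fat ->
  indecomposable e fat ->
  lambda_min_ge e fat (- 1 - tau)%R ->
  (exists x, ~~ fat x /\ 2 <= #|fat_nbrs e fat x|) ->
  (signed_iso (sg_pos e fat) (sg_neg e fat) Q001_pos Q001_neg \/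
   signed_iso (sg_pos e fat) (sg_neg e fat) Q101_pos Q101_neg \/
   signed_iso (sg_pos e fat) (sg_neg e fat) Q011_pos Q011_neg) /\
  #|[set x | ~~ fat x]| <= 2.
Proof.
move=> hH hF hI hl [x [fx dx2]].
have dx : fat_deg e fat x = 2%N.
  by apply/eqP; rewrite eqn_leq dx2 andbT fat_deg_le2.
case: (slim_vertices_structure hH hF hl hI fx dx) => [onlyx | [y [fy yx dy hb onlyxy]]].
  split; first by left; exact: special_graph_single fx onlyx.
  by apply: (slim_card_le2 (y := x)) => z /onlyx ->; left.
split; last exact: slim_card_le2 onlyxy.
by right; apply: (special_graph_pair hH fx fy yx dy onlyxy hb).
Qed.
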